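(* Let $n\in\mathbb N_0$, $a\in I$ and $L\in C^{[n]}(I^2)$. Define $\ell(s)=\int_a^sL(s,t)e^{i\kappa t}\,dt$, $r(s)=-e^{i\kappa a}\sigma_n[L(s,\cdot)](a)$ and $g(s)=[\ell(s)-r(s)]e^{-i\kappa s}$ for $s\in I$. Then for every $l\in\{0,1,\dots,n\}$ and $s\in I$, $$g^{(l)}(s)=-\sum_{(q,p)\in\mathbb U_{n,l}}C_l^p(-i\kappa)^{l-1-p-q}L^{(p,q)}(s,s)+\sum_{p=0}^lC_l^p(-i\kappa)^{l-p-n}\int_a^sL^{(p,n)}(s,t)e^{i\kappa(t-s)}\,dt.$$
   Context: $I=[-1,1]$, $\kappa>1$. $C^{[n]}(I^2)$ is the space of functions on $I^2$ whose partial derivatives $L^{(\alpha,\beta)}=\partial_s^\alpha\partial_t^\beta L$ with $\alpha,\beta\le n$ are continuous. For a function $u$ of one variable, $\sigma_n[u](t)=\sum_{j=0}^{n-1}\frac{(-1)^j}{(i\kappa)^{j+1}}u^{(j)}(t)$ (empty sum $=0$ if $n=0$). $C_l^p=\frac{l!}{p!(l-p)!}$. $\mathbb U_{n,l}=\{(q,p):q\in\{0,\dots,n-1\},\ p\in\{0,\dots,l\},\ q+p\ge l\}$. *)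

From Stdlib Require Import Reals ZArith List.
From Coquelicot Require Import Coquelicot.
Open Scope R_scope.

Definition inI (x : R) : Prop := -1 <= x <= 1.

Definition cis (x : R) : C := (cos x, sin x).

Definition Cpowz (z : C) (k : Z) : C :=
  if (0 <=? k)%Z then Cpow z (Z.to_nat k) else Cinv (Cpow z (Z.to_nat (- k))).

Definition csum (m : nat) (f : nat -> C) : C :=
  fold_right Cplus (RtoC 0) (map f (seq 0 m)).

(* f : R -> C has derivative l at s relative to I (one-sided at the endpoints) *)
Definition is_derive_I (f : R -> C) (s : R) (l : C) : Prop :=
  filterlim (fun t => scal (/ (t - s)) (minus (f t) (f s)))
    (within (fun t => inI t /\ t <> s) (locally s)) (locally l).

Definition derivs_I (f : R -> C) (k : nat) (F : nat -> R -> C) : Prop :=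
  (forall s, inI s -> F O s = f s) /\
  (forall j s, (j < k)%nat -> inI s -> is_derive_I (F j) s (F (S j) s)).

Definition continuous_I2 (F : R -> R -> C) : Prop :=
  forall s t, inI s -> inI t ->
    filterlim (fun p : R * R => F (fst p) (snd p))
      (within (fun p : R * R => inI (fst p) /\ inI (snd p)) (locally (s, t)))
      (locally (F s t)).

(* L in C^{[n]}(I^2) with Lp a b = d_s^a d_t^b L (a, b <= n), all continuous on I^2 *)
Definition Cn_I2 (n : nat) (L : R -> R -> C) (Lp : nat -> nat -> R -> R -> C) : Prop :=
  (forall s t, inI s -> inI t -> Lp O O s t = L s t) /\
  (forall b s t, (b < n)%nat -> inI s -> inI t ->
       is_derive_I (fun t' => Lp O b s t') t (Lp O (S b) s t)) /\
  (forall a b s t, (a < n)%nat -> (b <= n)%nat -> inI s -> inI t ->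
       is_derive_I (fun s' => Lp a b s' t) s (Lp (S a) b s t)) /\
  (forall a b, (a <= n)%nat -> (b <= n)%nat -> continuous_I2 (Lp a b)).

(* sigma_n[u](t) given the derivatives du j = u^{(j)} *)
Definition sigma_n (kappa : R) (n : nat) (du : nat -> R -> C) (t : R) : C :=
  csum n (fun j => Cmult (Cdiv (Cpow (RtoC (-1)) j) (Cpow (0, kappa) (S j))) (du j t)).

(* Repeated integration by parts in t gives
     l(s) - r(s) = sigma_n[L(s,.)](s) e^{i kappa s} + (-i kappa)^{-n} int_a^s L^{(0,n)}(s,t) e^{i kappa t} dt,
   which is the case l = 0. For the inductive step the formula for g^{(l)} is differentiated in s:
   a diagonal value L^{(p,q)}(s,s) has derivative L^{(p+1,q)}(s,s) + L^{(p,q+1)}(s,s), which follows by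
   differentiating L^{(p,q)}(s,t) = L^{(p,q)}(s,a) + int_a^t L^{(p,q+1)}(s,.) under the integral sign;
   Leibniz' rule differentiates the oscillatory integrals; and Pascal's rule regroups the result into
   the formula for l + 1.
   Derivatives on I are handled in epsilon-delta form, one-sided at the endpoints, with a mean value
   inequality in place of Rolle's theorem, which fails for complex-valued functions. *)

From Stdlib Require Import Reals ZArith List.
From Coquelicot Require Import Coquelicot.
From Stdlib Require Import Lra Lia Classical ClassicalEpsilon FunctionalExtensionality.
Open Scope R_scope.

Local Notation CV := C_R_CompleteNormedModule.

Lemma csum_Sr m f : csum (S m) f = (csum m f + f m)%C.
Proof.
  unfold csum. rewrite seq_S, map_app, fold_right_app. simpl.
  generalize (map f (seq 0 m)). intros l. induction l as [|x l IH]; simpl.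
  - ring.
  - rewrite IH. ring.
Qed.

Lemma csum_Sl m f : csum (S m) f = (f 0%nat + csum m (fun k => f (S k)))%C.
Proof. unfold csum. simpl. f_equal. rewrite <- seq_shift, map_map. reflexivity. Qed.

Lemma csum_ext m f g : (forall k, (k < m)%nat -> f k = g k) -> csum m f = csum m g.
Proof.
  induction m as [|m IH]; intros H; [reflexivity|].
  rewrite !csum_Sr, IH, H; auto.
Qed.

Lemma csum_plus m f g : csum m (fun k => f k + g k)%C = (csum m f + csum m g)%C.
Proof. induction m as [|m IH]; [unfold csum; simpl; ring|]. rewrite !csum_Sr, IH. ring. Qed.

Lemma csum_scal m k f : csum m (fun j => k * f j)%C = (k * csum m f)%C.
Proof. induction m as [|m IH]; [unfold csum; simpl; ring|]. rewrite !csum_Sr, IH. ring. Qed.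

Lemma csum_zero m : csum m (fun _ => RtoC 0) = RtoC 0.
Proof. induction m as [|m IH]; [reflexivity|]. rewrite csum_Sr, IH. ring. Qed.

Lemma csum_pad m M f g : (m <= M)%nat -> (forall k, (k < m)%nat -> f k = g k) ->
  (forall k, (m <= k < M)%nat -> g k = RtoC 0) -> csum m f = csum M g.
Proof.
  intros HmM Hfg Hg. induction M as [|M IH].
  - replace m with 0%nat by lia. reflexivity.
  - destruct (Nat.eq_dec m (S M)) as [->|Hne]; [now apply csum_ext|].
    rewrite csum_Sr, <- IH, Hg by (lia || (intros; apply Hg; lia)). ring.
Qed.

Lemma Cmod_le_Rabs_sum (z : C) : Cmod z <= Rabs (fst z) + Rabs (snd z).
Proof.
  destruct z as [x y]. unfold Cmod; simpl. apply Rsqr_incr_0_var.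
  - rewrite Rsqr_sqrt by nra. unfold Rsqr. rewrite !Rmult_1_r.
    assert (0 <= Rabs x * Rabs y) by (apply Rmult_le_pos; apply Rabs_pos).
    assert (Rabs x * Rabs x = x * x) by (rewrite <- Rabs_mult; apply Rabs_right; nra).
    assert (Rabs y * Rabs y = y * y) by (rewrite <- Rabs_mult; apply Rabs_right; nra).
    nra.
  - pose proof (Rabs_pos x); pose proof (Rabs_pos y); lra.
Qed.

Lemma Rmult_div_succ_le (K e : R) : 0 <= K -> 0 <= e -> K * (e / (K + 1)) <= e.
Proof. intros. apply Rmult_le_reg_r with (K + 1); [lra|]. field_simplify; nra. Qed.

Lemma cis_add x y : (cis x * cis y)%C = cis (x + y).
Proof. unfold cis, Cmult. cbn [fst snd]. rewrite cos_plus, sin_plus. f_equal; ring. Qed.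

Lemma cis_0 : cis 0 = RtoC 1.
Proof. unfold cis, RtoC. rewrite cos_0, sin_0. reflexivity. Qed.

Lemma Rabs_sub_le_of_derive_bounded (f f' : R -> R) x y :
  (forall z, derivable_pt_lim f z (f' z)) -> (forall z, Rabs (f' z) <= 1) ->
  Rabs (f x - f y) <= Rabs (x - y).
Proof.
  intros Hd Hb. destruct (MVT_gen f y x f') as [c [_ ->]].
  - intros; apply is_derive_Reals, Hd.
  - intros z _. apply derivable_continuous_pt. exists (f' z). apply Hd.
  - rewrite Rabs_mult. pose proof (Rabs_pos (x - y)). specialize (Hb c). nra.
Qed.

Lemma cis_lipschitz x y : Cmod (cis x - cis y)%C <= 2 * Rabs (x - y).
Proof.
  eapply Rle_trans; [apply Cmod_le_Rabs_sum|]. unfold cis. cbn [fst snd Cminus Cplus Copp].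
  assert (Hc := Rabs_sub_le_of_derive_bounded cos (fun z => - sin z) x y).
  assert (Hs := Rabs_sub_le_of_derive_bounded sin cos x y).
  unfold Rminus in Hc, Hs.
  assert (Rabs (cos x + - cos y) <= Rabs (x + - y)).
  { apply Hc; intros z; [apply derivable_pt_lim_cos|]. rewrite Rabs_Ropp. apply Rabs_le, SIN_bound. }
  assert (Rabs (sin x + - sin y) <= Rabs (x + - y)).
  { apply Hs; intros z; [apply derivable_pt_lim_sin|]. apply Rabs_le, COS_bound. }
  unfold Rminus. lra.
Qed.

Definition cont_I (h : R -> C) : Prop :=
  forall s, inI s -> forall eps, 0 < eps -> exists del, 0 < del /\
    forall t, inI t -> Rabs (t - s) < del -> Cmod (h t - h s)%C < eps.

Definition cont_I2 (F : R -> R -> C) : Prop :=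
  forall s t, inI s -> inI t -> forall eps, 0 < eps -> exists del, 0 < del /\
    forall x y, inI x -> inI y -> Rabs (x - s) < del -> Rabs (y - t) < del ->
      Cmod (F x y - F s t)%C < eps.

Lemma continuous_I2_cont_I2 F : continuous_I2 F -> cont_I2 F.
Proof.
  intros HF s t Hs Ht eps Heps. specialize (HF s t Hs Ht).
  apply (proj1 (@filterlim_locally_ball_norm _ _ C_R_NormedModule _ _ _ _))
    with (eps := mkposreal eps Heps) in HF.
  destruct HF as [[del Hdel] H]. exists del. split; auto. intros x y Hx Hy Hxs Hyt.
  specialize (H (x, y)). unfold ball_norm in H. rewrite <- Cmod_norm in H.
  apply H; split; assumption.
Qed.

Lemma cont_I2_const (c : C) : cont_I2 (fun _ _ => c).
Proof.
  intros s t _ _ eps Heps. exists 1. split; [lra|]. intros.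
  replace (c - c)%C with (RtoC 0) by ring. rewrite Cmod_0; lra.
Qed.

Lemma cont_I2_plus F G : cont_I2 F -> cont_I2 G -> cont_I2 (fun x y => F x y + G x y)%C.
Proof.
  intros HF HG s t Hs Ht eps Heps.
  destruct (HF s t Hs Ht (eps/2) ltac:(lra)) as [d1 [Hd1 H1]].
  destruct (HG s t Hs Ht (eps/2) ltac:(lra)) as [d2 [Hd2 H2]].
  exists (Rmin d1 d2). split; [now apply Rmin_pos|]. intros x y Hx Hy Hxs Hyt.
  pose proof (Rmin_l d1 d2). pose proof (Rmin_r d1 d2).
  specialize (H1 x y Hx Hy ltac:(lra) ltac:(lra)). specialize (H2 x y Hx Hy ltac:(lra) ltac:(lra)).
  replace (F x y + G x y - (F s t + G s t))%C with ((F x y - F s t) + (G x y - G s t))%C by ring.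
  eapply Rle_lt_trans; [apply Cmod_triangle | lra].
Qed.

Lemma cont_I2_mult F G : cont_I2 F -> cont_I2 G -> cont_I2 (fun x y => F x y * G x y)%C.
Proof.
  intros HF HG s t Hs Ht eps Heps.
  pose proof (Cmod_ge_0 (F s t)) as PF. pose proof (Cmod_ge_0 (G s t)) as PG.
  set (e1 := eps / 2 / (Cmod (G s t) + 1)). set (e2 := Rmin 1 (eps / 2 / (Cmod (F s t) + 1))).
  assert (He1 : 0 < e1) by (apply Rdiv_lt_0_compat; lra).
  assert (He2 : 0 < e2) by (apply Rmin_pos; [lra | apply Rdiv_lt_0_compat; lra]).
  destruct (HF s t Hs Ht e1 He1) as [d1 [Hd1 H1]]. destruct (HG s t Hs Ht e2 He2) as [d2 [Hd2 H2]].
  exists (Rmin d1 d2). split; [now apply Rmin_pos|]. intros x y Hx Hy Hxs Hyt.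
  pose proof (Rmin_l d1 d2). pose proof (Rmin_r d1 d2).
  specialize (H1 x y Hx Hy ltac:(lra) ltac:(lra)). specialize (H2 x y Hx Hy ltac:(lra) ltac:(lra)).
  pose proof (Rmin_l 1 (eps / 2 / (Cmod (F s t) + 1))). pose proof (Rmin_r 1 (eps / 2 / (Cmod (F s t) + 1))).
  replace (F x y * G x y - F s t * G s t)%C with ((F x y - F s t) * G x y + F s t * (G x y - G s t))%C by ring.
  eapply Rle_lt_trans; [apply Cmod_triangle|]. rewrite !Cmod_mult.
  assert (HGb : Cmod (G x y) <= Cmod (G s t) + 1).
  { replace (G x y) with ((G x y - G s t) + G s t)%C by ring.
    eapply Rle_trans; [apply Cmod_triangle | unfold e2 in *; lra]. }
  assert (E1 : Cmod (F x y - F s t)%C * Cmod (G x y) <= eps / 2).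
  { apply Rle_trans with (e1 * (Cmod (G s t) + 1)); [apply Rmult_le_compat; auto using Cmod_ge_0; lra|].
    unfold e1. right. field. lra. }
  assert (E2 : Cmod (F s t) * Cmod (G x y - G s t)%C < eps / 2).
  { apply Rle_lt_trans with (Cmod (F s t) * (eps / 2 / (Cmod (F s t) + 1))).
    - apply Rmult_le_compat_l; unfold e2 in *; lra.
    - apply Rmult_lt_reg_r with (Cmod (F s t) + 1); [lra|].
      field_simplify; lra. }
  lra.
Qed.

Lemma cont_I2_opp F : cont_I2 F -> cont_I2 (fun x y => - F x y)%C.
Proof.
  intros HF s t Hs Ht eps Heps. destruct (HF s t Hs Ht eps Heps) as [d [Hd H]].
  exists d. split; auto. intros x y Hx Hy Hxs Hyt.
  replace (- F x y - - F s t)%C with (- (F x y - F s t))%C by ring. rewrite Cmod_opp. auto.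
Qed.

Lemma cont_I2_cis (phi : R -> R -> R) K : 0 <= K ->
  (forall x y s t, Rabs (phi x y - phi s t) <= K * (Rabs (x - s) + Rabs (y - t))) ->
  cont_I2 (fun x y => cis (phi x y)).
Proof.
  intros HK Hphi s t _ _ eps Heps. exists (eps / (4 * K + 1)). split; [apply Rdiv_lt_0_compat; lra|].
  intros x y _ _ Hx Hy. eapply Rle_lt_trans; [apply cis_lipschitz|].
  specialize (Hphi x y s t).
  assert (K * (Rabs (x - s) + Rabs (y - t)) <= K * (2 * (eps / (4 * K + 1)))) by (apply Rmult_le_compat_l; lra).
  assert (K * (2 * (eps / (4 * K + 1))) * 2 < eps).
  { apply Rmult_lt_reg_r with (4 * K + 1); [lra|]. field_simplify; lra. }
  lra.
Qed.

Lemma cont_I2_section F s : cont_I2 F -> inI s -> cont_I (F s).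
Proof.
  intros HF Hs t Ht eps Heps. destruct (HF s t Hs Ht eps Heps) as [d [Hd H]].
  exists d. split; auto. intros y Hy Hyt. apply H; auto. rewrite Rminus_diag, Rabs_R0; lra.
Qed.

Lemma cont_I2_of_cont_I (h : R -> C) : cont_I h -> cont_I2 (fun _ t => h t).
Proof.
  intros Hh s t Hs Ht eps Heps. destruct (Hh t Ht eps Heps) as [d [Hd H]].
  exists d. split; auto.
Qed.

Lemma cont_I_of_cont_I2 (op : C -> C -> C) f g :
  (forall F G, cont_I2 F -> cont_I2 G -> cont_I2 (fun x y => op (F x y) (G x y))) ->
  cont_I f -> cont_I g -> cont_I (fun x => op (f x) (g x)).
Proof.
  intros Hop Hf Hg s Hs.
  apply (cont_I2_section (fun _ x => op (f x) (g x)) s); auto.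
  apply Hop; apply cont_I2_of_cont_I; auto.
Qed.

Lemma cont_I_const (c : C) : cont_I (fun _ => c).
Proof. intros s Hs. apply (cont_I2_section (fun _ _ => c) s); auto using cont_I2_const. Qed.

Lemma cont_I_plus f g : cont_I f -> cont_I g -> cont_I (fun x => f x + g x)%C.
Proof. apply (cont_I_of_cont_I2 Cplus), cont_I2_plus. Qed.

Lemma cont_I_mult f g : cont_I f -> cont_I g -> cont_I (fun x => f x * g x)%C.
Proof. apply (cont_I_of_cont_I2 Cmult), cont_I2_mult. Qed.

Lemma cont_I_minus f g : cont_I f -> cont_I g -> cont_I (fun x => f x - g x)%C.
Proof.
  intros Hf Hg. apply cont_I_plus; auto. intros s Hs.
  apply (cont_I2_section (fun _ x => - g x)%C s); auto.
  apply cont_I2_opp, cont_I2_of_cont_I; auto.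
Qed.

Lemma cont_I_ext f g : cont_I f -> (forall t, inI t -> f t = g t) -> cont_I g.
Proof.
  intros Hf E s Hs eps Heps. destruct (Hf s Hs eps Heps) as [d [Hd K]]. exists d. split; auto.
  intros t Ht Hts. rewrite <- !E by auto. auto.
Qed.

Lemma cont_I2_uniform_in_second F s : cont_I2 F -> inI s -> forall eps, 0 < eps -> exists del, 0 < del /\
  forall x t, inI x -> inI t -> Rabs (x - s) < del -> Cmod (F x t - F s t)%C < eps.
Proof.
  intros HF Hs eps Heps.
  assert (H : forall t, {d : posreal | inI t -> forall x y, inI x -> inI y ->
      Rabs (x - s) < d -> Rabs (y - t) < d -> Cmod (F x y - F s t)%C < eps / 2}).
  { intro t. apply constructive_indefinite_description.
    destruct (classic (inI t)) as [Ht|Ht].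
    - destruct (HF s t Hs Ht (eps/2)) as [d [Hd Hd']]; [lra|]. now exists (mkposreal d Hd).
    - exists (mkposreal 1 Rlt_0_1). intro; contradiction. }
  destruct (compactness_value_1d (-1) 1 (fun t => proj1_sig (H t))) as [d Hd].
  exists d. split; [apply cond_pos|]. intros x t Hx Ht Hxs.
  apply NNPP. intro Hn. apply (Hd t Ht). intros [u [Hu [Htu Hdu]]].
  apply Hn. destruct (H u) as [du Hdu'] eqn:E. simpl in Htu, Hdu.
  assert (H1 := Hdu' Hu x t Hx Ht ltac:(lra) Htu).
  assert (H2 := Hdu' Hu s t Hs Ht ltac:(rewrite Rminus_diag, Rabs_R0; apply cond_pos) Htu).
  replace (F x t - F s t)%C with ((F x t - F s u) - (F s t - F s u))%C by ring.
  eapply Rle_lt_trans; [apply Cmod_triangle|]. rewrite Cmod_opp. lra.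
Qed.

Lemma cont_I2_cis_diff kappa : cont_I2 (fun x t => cis (kappa * (t - x))).
Proof.
  apply (cont_I2_cis _ (Rabs kappa)); [apply Rabs_pos|]. intros x y s t.
  replace (kappa * (y - x) - kappa * (t - s)) with (kappa * ((y - t) - (x - s))) by ring.
  rewrite Rabs_mult. apply Rmult_le_compat_l; [apply Rabs_pos|].
  eapply Rle_trans; [apply Rabs_triang|]. rewrite Rabs_Ropp. lra.
Qed.

Lemma cont_I2_cis_scal kappa : cont_I2 (fun _ t => cis (kappa * t)).
Proof.
  apply (cont_I2_cis (fun _ t => kappa * t) (Rabs kappa)); [apply Rabs_pos|].
  intros x y s t. rewrite <- Rmult_minus_distr_l, Rabs_mult.
  apply Rmult_le_compat_l; [apply Rabs_pos|]. pose proof (Rabs_pos (x - s)). lra.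
Qed.

(** * Derivatives on I *)

Definition has_derive_I (f : R -> C) (s : R) (l : C) : Prop :=
  forall eps, 0 < eps -> exists del, 0 < del /\ forall t, inI t -> Rabs (t - s) < del ->
    Cmod (f t - f s - RtoC (t - s) * l)%C <= eps * Rabs (t - s).

Lemma Cmod_sub_scal (a b l : C) (h : R) : h <> 0 ->
  Cmod (a - b - RtoC h * l)%C = Rabs h * Cmod (RtoC (/ h) * (a - b) - l)%C.
Proof.
  intros H. rewrite <- Cmod_R, <- Cmod_mult. f_equal.
  assert (RtoC h <> 0%C) by (intro E; apply RtoC_inj in E; auto).
  rewrite RtoC_inv by auto. field. auto.
Qed.

Lemma minus_scal_C (r : R) (a b l : C) :
  @minus (NormedModule.AbelianGroup R_AbsRing C_R_NormedModule)
    (@scal R_Ring (prod_ModuleSpace R_Ring R_ModuleSpace R_ModuleSpace) r (@minus C_AbelianGroup a b)) l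
  = (RtoC r * (a - b) - l)%C.
Proof.
  destruct a, b, l. unfold scal, minus, plus, opp; simpl. unfold prod_scal, prod_plus, prod_opp; simpl.
  unfold scal, plus, opp, mult; simpl. unfold Cminus, Cplus, Copp, Cmult, RtoC; simpl.
  unfold mult; simpl. f_equal; ring.
Qed.

Lemma has_derive_I_is_derive_I f s l : has_derive_I f s l -> is_derive_I f s l.
Proof.
  intros HD. apply (proj2 (@filterlim_locally_ball_norm _ _ C_R_NormedModule _ _ _ _)).
  intros eps. destruct (HD (eps/2)) as [del [Hdel H]]; [destruct eps; simpl; lra|].
  exists (mkposreal del Hdel). intros t Hb [HtI Hts]. change (Rabs (t - s) < del) in Hb.
  unfold ball_norm. rewrite <- Cmod_norm, minus_scal_C.
  specialize (H t HtI Hb). rewrite Cmod_sub_scal in H by lra.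
  assert (0 < Rabs (t - s)) by (apply Rabs_pos_lt; lra).
  assert (Cmod (RtoC (/ (t - s)) * (f t - f s) - l)%C <= eps / 2) by (apply Rmult_le_reg_l with (Rabs (t - s)); lra).
  destruct eps; simpl in *; lra.
Qed.

Lemma is_derive_I_has_derive_I f s l : is_derive_I f s l -> has_derive_I f s l.
Proof.
  intros HD eps Heps.
  apply (proj1 (@filterlim_locally_ball_norm _ _ C_R_NormedModule _ _ _ _))
    with (eps := mkposreal eps Heps) in HD.
  destruct HD as [[del Hdel] H]. exists del. split; auto. intros t HtI Hb.
  destruct (Req_dec t s) as [->|E].
  { rewrite Rminus_diag, Rabs_R0. replace (f s - f s - RtoC 0 * l)%C with (RtoC 0) by ring.
    rewrite Cmod_0. lra. }
  specialize (H t Hb (conj HtI E)). unfold ball_norm in H. rewrite <- Cmod_norm, minus_scal_C in H.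
  simpl in H. rewrite Cmod_sub_scal by lra. pose proof (Rabs_pos (t - s)). nra.
Qed.

Lemma has_derive_I_val f s l l' : has_derive_I f s l -> l = l' -> has_derive_I f s l'.
Proof. now intros H <-. Qed.

Lemma has_derive_I_ext f g s l : (forall t, inI t -> f t = g t) -> inI s ->
  has_derive_I f s l -> has_derive_I g s l.
Proof.
  intros E Hs HD eps Heps. destruct (HD eps Heps) as [d [Hd H]]. exists d; split; auto.
  intros t Ht Hts. rewrite <- !E by auto. auto.
Qed.

Lemma has_derive_I_cont f s l : has_derive_I f s l -> forall eps, 0 < eps -> exists del, 0 < del /\
  forall t, inI t -> Rabs (t - s) < del -> Cmod (f t - f s)%C < eps.
Proof.
  intros HD eps Heps. destruct (HD 1 Rlt_0_1) as [d [Hd H]]. pose proof (Cmod_ge_0 l).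
  exists (Rmin d (eps / (Cmod l + 2))). split; [apply Rmin_pos; auto; apply Rdiv_lt_0_compat; lra|].
  intros t Ht Hts. pose proof (Rmin_l d (eps / (Cmod l + 2))). pose proof (Rmin_r d (eps / (Cmod l + 2))).
  specialize (H t Ht ltac:(lra)).
  replace (f t - f s)%C with ((f t - f s - RtoC (t - s) * l) + RtoC (t - s) * l)%C by ring.
  eapply Rle_lt_trans; [apply Cmod_triangle|]. rewrite Cmod_mult, Cmod_R.
  assert (Rabs (t - s) * (Cmod l + 2) < eps).
  { apply Rmult_lt_reg_r with (/ (Cmod l + 2)); [apply Rinv_0_lt_compat; lra|].
    rewrite Rmult_assoc, Rinv_r by lra. lra. }
  pose proof (Rabs_pos (t - s)). nra.
Qed.

Lemma has_derive_I_const (c : C) s : has_derive_I (fun _ => c) s 0%C.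
Proof.
  intros eps Heps. exists 1. split; [lra|]. intros t _ _.
  replace (c - c - RtoC (t - s) * 0)%C with (RtoC 0) by ring. rewrite Cmod_0.
  pose proof (Rabs_pos (t - s)). nra.
Qed.

Lemma has_derive_I_id_mult (c : C) s : has_derive_I (fun x => RtoC x * c)%C s c.
Proof.
  intros eps Heps. exists 1. split; [lra|]. intros t _ _.
  replace (RtoC t * c - RtoC s * c - RtoC (t - s) * c)%C with (RtoC 0) by (rewrite RtoC_minus; ring).
  rewrite Cmod_0. pose proof (Rabs_pos (t - s)). nra.
Qed.

Lemma has_derive_I_plus f g s a b : has_derive_I f s a -> has_derive_I g s b ->
  has_derive_I (fun x => f x + g x)%C s (a + b)%C.
Proof.
  intros Hf Hg eps Heps. destruct (Hf (eps/2) ltac:(lra)) as [d1 [Hd1 H1]].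
  destruct (Hg (eps/2) ltac:(lra)) as [d2 [Hd2 H2]].
  exists (Rmin d1 d2). split; [now apply Rmin_pos|]. intros t Ht Hts.
  specialize (H1 t Ht (Rlt_le_trans _ _ _ Hts (Rmin_l _ _))).
  specialize (H2 t Ht (Rlt_le_trans _ _ _ Hts (Rmin_r _ _))).
  replace (f t + g t - (f s + g s) - RtoC (t - s) * (a + b))%C with
    ((f t - f s - RtoC (t - s) * a) + (g t - g s - RtoC (t - s) * b))%C by ring.
  eapply Rle_trans; [apply Cmod_triangle | lra].
Qed.

Lemma has_derive_I_opp f s a : has_derive_I f s a -> has_derive_I (fun x => - f x)%C s (- a)%C.
Proof.
  intros H eps Heps. destruct (H eps Heps) as [d [Hd K]]. exists d. split; auto. intros t Ht Hts.
  replace (- f t - - f s - RtoC (t - s) * - a)%C with (- (f t - f s - RtoC (t - s) * a))%C by ring.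
  rewrite Cmod_opp. auto.
Qed.

Lemma has_derive_I_minus f g s a b : has_derive_I f s a -> has_derive_I g s b ->
  has_derive_I (fun x => f x - g x)%C s (a - b)%C.
Proof. intros Hf Hg. exact (has_derive_I_plus _ _ _ _ _ Hf (has_derive_I_opp _ _ _ Hg)). Qed.

Lemma has_derive_I_mult f g s a b : has_derive_I f s a -> has_derive_I g s b ->
  has_derive_I (fun x => f x * g x)%C s (a * g s + f s * b)%C.
Proof.
  intros Hf Hg eps Heps.
  pose proof (Cmod_ge_0 a) as Pa. pose proof (Cmod_ge_0 (f s)) as Pf. pose proof (Cmod_ge_0 (g s)) as Pg.
  set (e := eps / 3). set (M := Cmod (g s) + 1).
  destruct (Hf (e / M) ltac:(unfold e, M; apply Rdiv_lt_0_compat; lra)) as [d1 [Hd1 H1]].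
  destruct (Hg (e / (Cmod (f s) + 1)) ltac:(unfold e; apply Rdiv_lt_0_compat; lra)) as [d2 [Hd2 H2]].
  destruct (has_derive_I_cont _ _ _ Hg (Rmin 1 (e / (Cmod a + 1)))
    ltac:(apply Rmin_pos; [lra | unfold e; apply Rdiv_lt_0_compat; lra])) as [d3 [Hd3 H3]].
  exists (Rmin d1 (Rmin d2 d3)). split; [repeat apply Rmin_pos; auto|]. intros t Ht Hts.
  pose proof (Rmin_l d1 (Rmin d2 d3)). pose proof (Rmin_r d1 (Rmin d2 d3)).
  pose proof (Rmin_l d2 d3). pose proof (Rmin_r d2 d3).
  specialize (H1 t Ht ltac:(lra)). specialize (H2 t Ht ltac:(lra)). specialize (H3 t Ht ltac:(lra)).
  pose proof (Rmin_l 1 (e / (Cmod a + 1))). pose proof (Rmin_r 1 (e / (Cmod a + 1))).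
  pose proof (Rabs_pos (t - s)) as Hh. set (h := RtoC (t - s)) in *.
  replace (f t * g t - f s * g s - h * (a * g s + f s * b))%C with
    ((f t - f s - h * a) * g t + h * a * (g t - g s) + f s * (g t - g s - h * b))%C by ring.
  assert (Hgt : Cmod (g t) <= M).
  { replace (g t) with ((g t - g s) + g s)%C by ring.
    eapply Rle_trans; [apply Cmod_triangle | unfold M; lra]. }
  assert (E1 : Cmod ((f t - f s - h * a) * g t)%C <= e * Rabs (t - s)).
  { rewrite Cmod_mult. apply Rle_trans with (e / M * Rabs (t - s) * M).
    - apply Rmult_le_compat; auto using Cmod_ge_0.
    - right. unfold M. field. lra. }
  assert (E2 : Cmod (h * a * (g t - g s))%C <= e * Rabs (t - s)).
  { rewrite !Cmod_mult. unfold h. rewrite Cmod_R.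
    assert (Cmod a * Cmod (g t - g s)%C <= e).
    { apply Rle_trans with (Cmod a * (e / (Cmod a + 1))); [apply Rmult_le_compat_l; lra|].
      apply Rmult_div_succ_le; unfold e; lra. }
    nra. }
  assert (E3 : Cmod (f s * (g t - g s - h * b))%C <= e * Rabs (t - s)).
  { rewrite Cmod_mult. assert (Cmod (f s) * (e / (Cmod (f s) + 1)) <= e) by (apply Rmult_div_succ_le; unfold e; lra).
    apply Rle_trans with (Cmod (f s) * (e / (Cmod (f s) + 1) * Rabs (t - s))); [apply Rmult_le_compat_l|]; nra. }
  eapply Rle_trans; [apply Cmod_triangle|].
  eapply Rle_trans; [apply Rplus_le_compat_r, Cmod_triangle | unfold e in *; lra].
Qed.

Lemma has_derive_I_scal (k : C) f s a : has_derive_I f s a -> has_derive_I (fun x => k * f x)%C s (k * a)%C.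
Proof.
  intros Hf. eapply has_derive_I_val.
  - apply (has_derive_I_mult (fun _ => k)); [apply has_derive_I_const | exact Hf].
  - ring.
Qed.

Lemma has_derive_I_csum m (F : R -> nat -> C) F' s :
  (forall j, (j < m)%nat -> has_derive_I (fun x => F x j) s (F' j)) ->
  has_derive_I (fun x => csum m (F x)) s (csum m F').
Proof.
  induction m as [|m IH]; intros H; [exact (has_derive_I_const (RtoC 0) s)|].
  assert (E : (fun x => csum (S m) (F x)) = (fun x => csum m (F x) + F x m)%C)
    by (apply functional_extensionality; intro; apply csum_Sr).
  rewrite E, csum_Sr. apply has_derive_I_plus; [apply IH; intros; apply H|apply H]; lia.
Qed.

Lemma has_derive_I_of_real_parts f s a1 a2 : derivable_pt_lim (fun x => fst (f x)) s a1 ->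
  derivable_pt_lim (fun x => snd (f x)) s a2 -> has_derive_I f s (a1, a2).
Proof.
  intros H1 H2 eps Heps.
  destruct (H1 (eps/2) ltac:(lra)) as [d1 K1]. destruct (H2 (eps/2) ltac:(lra)) as [d2 K2].
  exists (Rmin d1 d2). split; [apply Rmin_pos; apply cond_pos|]. intros t Ht Hts.
  destruct (Req_dec t s) as [->|E].
  { rewrite Rminus_diag, Rabs_R0. replace (f s - f s - RtoC 0 * (a1, a2))%C with (RtoC 0) by ring.
    rewrite Cmod_0. lra. }
  set (h := t - s). assert (Hh : h <> 0) by (unfold h; lra).
  replace t with (s + h) by (unfold h; ring).
  specialize (K1 h Hh (Rlt_le_trans _ _ _ Hts (Rmin_l _ _))).
  specialize (K2 h Hh (Rlt_le_trans _ _ _ Hts (Rmin_r _ _))).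
  replace (s + h - s) with h by ring.
  eapply Rle_trans; [apply Cmod_le_Rabs_sum|].
  replace (fst (f (s + h)%R - f s - RtoC h * (a1, a2))%C) with (((fst (f (s + h)) - fst (f s)) / h - a1) * h)
    by (destruct (f (s + h)), (f s); simpl; field; auto).
  replace (snd (f (s + h)%R - f s - RtoC h * (a1, a2))%C) with (((snd (f (s + h)) - snd (f s)) / h - a2) * h)
    by (destruct (f (s + h)), (f s); simpl; field; auto).
  rewrite !Rabs_mult. pose proof (Rabs_pos h). nra.
Qed.

Lemma has_derive_I_cis k c s :
  has_derive_I (fun x => cis (k * x + c)) s ((0, k) * cis (k * s + c))%C.
Proof.
  replace ((0, k) * cis (k * s + c))%C with (- k * sin (k * s + c), k * cos (k * s + c))
    by (unfold cis, Cmult; simpl; f_equal; ring).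
  apply has_derive_I_of_real_parts; simpl; apply is_derive_Reals; auto_derive; auto; ring.
Qed.

(** * Mean value inequality *)

(* Extends a function on I to R, so that Stdlib's mean value theorem and Coquelicot's
   integrability criteria, which are stated on R, apply. *)
Definition clamp (x : R) : R := Rmax (-1) (Rmin 1 x).

Lemma clamp_inI x : inI (clamp x).
Proof. unfold inI, clamp, Rmax, Rmin; repeat destruct Rle_dec; lra. Qed.

Lemma clamp_id x : inI x -> clamp x = x.
Proof. unfold inI, clamp, Rmax, Rmin; repeat destruct Rle_dec; lra. Qed.

Lemma clamp_lipschitz x y : Rabs (clamp x - clamp y) <= Rabs (x - y).
Proof. unfold clamp, Rmax, Rmin; repeat destruct Rle_dec; unfold Rabs; repeat destruct Rcase_abs; lra. Qed.

Lemma between_inI s s' x : inI s -> inI s' -> Rmin s s' <= x <= Rmax s s' -> inI x.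
Proof. unfold inI, Rmin, Rmax; destruct Rle_dec; lra. Qed.

Lemma Rabs_sub_le_between s s' x : Rmin s s' <= x <= Rmax s s' -> Rabs (x - s) <= Rabs (s' - s).
Proof. unfold Rmin, Rmax; destruct Rle_dec; unfold Rabs; repeat destruct Rcase_abs; lra. Qed.

Section LinearForm.

Variable pr : C -> R.
Hypothesis pr_minus : forall z w, pr (z - w)%C = pr z - pr w.
Hypothesis pr_scal : forall (r : R) z, pr (RtoC r * z)%C = r * pr z.
Hypothesis pr_bounded : forall z, Rabs (pr z) <= Cmod z.

Lemma derivable_pt_lim_linear_form f x l : -1 < x < 1 -> has_derive_I f x l ->
  derivable_pt_lim (fun y => pr (f (clamp y))) x (pr l).
Proof.
  intros Hx HD eps Heps.
  destruct (HD (eps/2) ltac:(lra)) as [del [Hdel H]].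
  assert (Hp : 0 < Rmin del (Rmin (1 - x) (x + 1))) by (repeat apply Rmin_pos; lra).
  exists (mkposreal _ Hp). intros h Hh0 Hh. simpl in Hh.
  pose proof (Rmin_l del (Rmin (1 - x) (x + 1))). pose proof (Rmin_r del (Rmin (1 - x) (x + 1))).
  pose proof (Rmin_l (1 - x) (x + 1)). pose proof (Rmin_r (1 - x) (x + 1)).
  assert (HI : inI (x + h)) by (unfold inI; unfold Rabs in *; destruct Rcase_abs; lra).
  specialize (H (x + h) HI ltac:(replace (x + h - x) with h by ring; lra)).
  rewrite !clamp_id by (auto; unfold inI; lra). replace (x + h - x) with h in H by ring.
  assert (0 < Rabs h) by (apply Rabs_pos_lt; auto).
  replace ((pr (f (x + h)) - pr (f x)) / h - pr l) with (pr (f (x + h)%R - f x - RtoC h * l)%C / h)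
    by (rewrite !pr_minus, pr_scal; field; auto).
  unfold Rdiv. rewrite Rabs_mult, Rabs_inv.
  apply Rmult_lt_reg_r with (Rabs h); auto. rewrite Rmult_assoc, Rinv_l by lra.
  specialize (pr_bounded (f (x + h)%R - f x - RtoC h * l)%C). nra.
Qed.

Lemma mean_value_ineq_linear_form f d s s' M : inI s -> inI s' ->
  (forall x, Rmin s s' <= x <= Rmax s s' -> has_derive_I f x (d x)) ->
  (forall x, Rmin s s' <= x <= Rmax s s' -> Cmod (d x) <= M) ->
  Rabs (pr (f s') - pr (f s)) <= M * Rabs (s' - s).
Proof.
  intros Hs Hs' HD HM.
  destruct (MVT_gen (fun x => pr (f (clamp x))) s s' (fun x => pr (d x))) as [c [Hc E]].
  - intros x Hx. apply is_derive_Reals, derivable_pt_lim_linear_form; [|apply HD; lra].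
    unfold inI in *. unfold Rmin, Rmax in Hx; destruct Rle_dec in Hx; lra.
  - intros x Hx. assert (HxI := between_inI s s' x Hs Hs' Hx).
    intros eps Heps. destruct (has_derive_I_cont _ _ _ (HD x Hx) eps Heps) as [del [Hdel H]].
    exists del. split; auto. intros y [_ Hy]. simpl in *. unfold R_dist in *.
    rewrite (clamp_id x HxI), <- pr_minus. eapply Rle_lt_trans; [apply pr_bounded|].
    apply H; [apply clamp_inI|]. pose proof (clamp_lipschitz y x) as Hl.
    rewrite (clamp_id x HxI) in Hl. lra.
  - rewrite !clamp_id in E by auto. rewrite E, Rabs_mult.
    apply Rmult_le_compat_r; [apply Rabs_pos|]. eapply Rle_trans; [apply pr_bounded | apply HM; lra].
Qed.

End LinearForm.

Lemma mean_value_ineq_I f d s s' M : inI s -> inI s' ->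
  (forall x, Rmin s s' <= x <= Rmax s s' -> has_derive_I f x (d x)) ->
  (forall x, Rmin s s' <= x <= Rmax s s' -> Cmod (d x) <= M) ->
  Cmod (f s' - f s)%C <= 2 * M * Rabs (s' - s).
Proof.
  intros Hs Hs' HD HM.
  assert (H1 := mean_value_ineq_linear_form fst ltac:(intros [] []; reflexivity)
     ltac:(intros r []; simpl; ring) re_le_Cmod f d s s' M Hs Hs' HD HM).
  assert (H2 := mean_value_ineq_linear_form snd ltac:(intros [] []; reflexivity)
     ltac:(intros r []; simpl; ring)
     ltac:(intros z; eapply Rle_trans; [apply Rmax_r | apply Rmax_Cmod]) f d s s' M Hs Hs' HD HM).
  eapply Rle_trans; [apply Cmod_le_Rabs_sum|].
  replace (fst (f s' - f s)%C) with (fst (f s') - fst (f s)) by (destruct (f s'), (f s); simpl; ring).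
  replace (snd (f s' - f s)%C) with (snd (f s') - snd (f s)) by (destruct (f s'), (f s); simpl; ring).
  lra.
Qed.

Lemma has_derive_I_zero_const f a b : (forall x, inI x -> has_derive_I f x 0%C) -> inI a -> inI b ->
  f a = f b.
Proof.
  intros HD Ha Hb.
  assert (H := mean_value_ineq_I f (fun _ => 0%C) a b 0 Ha Hb
    ltac:(intros x Hx; apply HD; apply (between_inI a b); auto) ltac:(intros; cbv beta; rewrite Cmod_0; lra)).
  assert (Cmod (f b - f a)%C = 0) by (pose proof (Cmod_ge_0 (f b - f a)%C); lra).
  apply Cmod_eq_0 in H0. replace (f b) with ((f b - f a) + f a)%C by ring. rewrite H0. ring.
Qed.

Lemma has_derive_I_unique f s l1 l2 : inI s -> has_derive_I f s l1 -> has_derive_I f s l2 -> l1 = l2.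
Proof.
  intros Hs H1 H2. apply NNPP. intro Hne.
  assert (Hm : 0 < Cmod (l1 - l2)%C).
  { apply Cmod_gt_0. intro E. apply Hne. replace l1 with ((l1 - l2) + l2)%C by ring. rewrite E. ring. }
  set (m := Cmod (l1 - l2)%C) in *.
  destruct (H1 (m/4) ltac:(lra)) as [d1 [Hd1 K1]]. destruct (H2 (m/4) ltac:(lra)) as [d2 [Hd2 K2]].
  set (h := Rmin 1 (Rmin d1 d2) / 2).
  pose proof (Rmin_l 1 (Rmin d1 d2)). pose proof (Rmin_r 1 (Rmin d1 d2)).
  pose proof (Rmin_l d1 d2). pose proof (Rmin_r d1 d2).
  assert (0 < Rmin 1 (Rmin d1 d2)) by (repeat apply Rmin_pos; lra).
  (* step into I from whichever side of s has room *)
  set (t := if Rle_dec s 0 then s + h else s - h).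
  assert (Ht : inI t) by (unfold t, h, inI in *; destruct Rle_dec; lra).
  assert (Hts : Rabs (t - s) = h).
  { unfold t; destruct Rle_dec; [replace (s + h - s) with h by ring | replace (s - h - s) with (- h) by ring;
      rewrite Rabs_Ropp]; apply Rabs_right; unfold h; lra. }
  specialize (K1 t Ht ltac:(unfold h in *; lra)). specialize (K2 t Ht ltac:(unfold h in *; lra)).
  rewrite Hts in K1, K2.
  assert (E : Cmod (RtoC (t - s) * (l1 - l2))%C <= m / 2 * h).
  { replace (RtoC (t - s) * (l1 - l2))%C
      with ((f t - f s - RtoC (t - s) * l2) - (f t - f s - RtoC (t - s) * l1))%C by ring.
    eapply Rle_trans; [apply Cmod_triangle|]. rewrite Cmod_opp. lra. }
  rewrite Cmod_mult, Cmod_R, Hts in E. fold m in E. assert (0 < h) by (unfold h; lra). nra.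
Qed.

(** * Integrals and Leibniz' rule *)

Lemma is_RInt_Cmult (k : C) f a b l : is_RInt (V := C_R_NormedModule) f a b l ->
  is_RInt (V := C_R_NormedModule) (fun t => k * f t)%C a b (k * l)%C.
Proof.
  intros H. destruct k as [k1 k2], l as [l1 l2].
  assert (H1 := is_RInt_fct_extend_fst (U := R_NormedModule) (V := R_NormedModule) _ _ _ _ H).
  assert (H2 := is_RInt_fct_extend_snd (U := R_NormedModule) (V := R_NormedModule) _ _ _ _ H).
  cbn [fst snd] in H1, H2.
  replace ((k1, k2) * (l1, l2))%C with (k1 * l1 - k2 * l2, k1 * l2 + k2 * l1)
    by (unfold Cmult; cbn [fst snd]; f_equal; ring).
  apply (is_RInt_fct_extend_pair (U := R_NormedModule) (V := R_NormedModule)).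
  - apply (is_RInt_ext (V := R_NormedModule)) with (f := fun t => minus (scal k1 (fst (f t))) (scal k2 (snd (f t)))).
    { intros x _. destruct (f x) as [u v]. unfold Cmult; cbn [fst snd].
      change (k1 * u + - (k2 * v) = k1 * u - k2 * v :> R). ring. }
    exact (is_RInt_minus (V := R_NormedModule) _ _ a b _ _ (is_RInt_scal _ _ _ k1 _ H1) (is_RInt_scal _ _ _ k2 _ H2)).
  - apply (is_RInt_ext (V := R_NormedModule)) with (f := fun t => plus (scal k1 (snd (f t))) (scal k2 (fst (f t)))).
    { intros x _. destruct (f x) as [u v]. unfold Cmult; cbn [fst snd].
      change (k1 * v + k2 * u = k1 * v + k2 * u :> R). ring. }
    exact (is_RInt_plus (V := R_NormedModule) _ _ a b _ _ (is_RInt_scal _ _ _ k1 _ H2) (is_RInt_scal _ _ _ k2 _ H1)).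
Qed.

Lemma RInt_Cmult (k : C) f a b : ex_RInt (V := CV) f a b ->
  RInt (V := CV) (fun t => k * f t)%C a b = (k * RInt (V := CV) f a b)%C.
Proof. intros H. apply (is_RInt_unique (V := CV)), is_RInt_Cmult, (RInt_correct (V := CV)), H. Qed.

Lemma RInt_Cconst (c : C) a b : RInt (V := CV) (fun _ => c) a b = (RtoC (b - a) * c)%C.
Proof.
  rewrite (RInt_const (V := CV)). destruct c as [u v].
  change (((b - a) * u, (b - a) * v) = (RtoC (b - a) * (u, v))%C).
  unfold Cmult, RtoC; cbn [fst snd]. f_equal; ring.
Qed.

Lemma Cmod_RInt_le f a b M : ex_RInt (V := CV) f a b ->
  (forall x, Rmin a b <= x <= Rmax a b -> Cmod (f x) <= M) ->
  Cmod (RInt (V := CV) f a b) <= M * Rabs (b - a).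
Proof.
  intros Hex HM. destruct (Rle_dec a b) as [Hab|Hab].
  - rewrite Rabs_right, Cmod_norm, Rmult_comm by lra.
    apply (norm_RInt_le_const (V := CV) f a b); auto; [|now apply (RInt_correct (V := CV))].
    intros x Hx. rewrite <- Cmod_norm. apply HM. rewrite Rmin_left, Rmax_right; lra.
  - rewrite <- (opp_RInt_swap (V := CV)) by now apply (ex_RInt_swap (V := CV)).
    rewrite Cmod_norm, (norm_opp (V := CV)), Rabs_left by lra.
    replace (- (b - a)) with (a - b) by ring. rewrite Rmult_comm.
    apply (norm_RInt_le_const (V := CV) f b a); [lra| |now apply (RInt_correct (V := CV)), (ex_RInt_swap (V := CV))].
    intros x Hx. rewrite <- Cmod_norm. apply HM. rewrite Rmin_right, Rmax_left; lra.
Qed.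

Lemma ex_RInt_cont_I h a b : cont_I h -> inI a -> inI b -> ex_RInt (V := CV) h a b.
Proof.
  intros Hh Ha Hb. apply (ex_RInt_ext (V := CV)) with (f := fun x => h (clamp x)).
  { intros x Hx. rewrite clamp_id; auto. apply (between_inI a b); auto; lra. }
  apply (ex_RInt_continuous (V := CV)). intros z _.
  apply (proj2 (@filterlim_locally_ball_norm _ _ C_R_NormedModule _ _ _ _)).
  intros [eps Heps]. destruct (Hh (clamp z) (clamp_inI z) eps Heps) as [d [Hd H]].
  exists (mkposreal d Hd). intros y Hy. change (Rabs (y - z) < d) in Hy.
  unfold ball_norm. rewrite <- Cmod_norm. apply H; [apply clamp_inI|].
  pose proof (clamp_lipschitz y z). lra.
Qed.

Lemma RInt_Cplus f g a b : ex_RInt (V := CV) f a b -> ex_RInt (V := CV) g a b ->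
  RInt (V := CV) (fun t => f t + g t)%C a b = (RInt (V := CV) f a b + RInt (V := CV) g a b)%C.
Proof. exact (RInt_plus (V := CV) f g a b). Qed.

Lemma RInt_Cminus f g a b : ex_RInt (V := CV) f a b -> ex_RInt (V := CV) g a b ->
  RInt (V := CV) (fun t => f t - g t)%C a b = (RInt (V := CV) f a b - RInt (V := CV) g a b)%C.
Proof. exact (RInt_minus (V := CV) f g a b). Qed.

Lemma RInt_C_ext (f g : R -> C) a b : (forall x, f x = g x) ->
  RInt (V := CV) f a b = RInt (V := CV) g a b.
Proof. intros H. apply (RInt_ext (V := CV)). intros x _. apply H. Qed.

Section Leibniz.

Variables H K : R -> R -> C.
Hypothesis H_cont : cont_I2 H.
Hypothesis K_cont : cont_I2 K.
Hypothesis H_derive : forall x t, inI x -> inI t -> has_derive_I (fun y => H y t) x (K x t).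

Lemma has_derive_I_RInt_param a b s : inI a -> inI b -> inI s ->
  has_derive_I (fun x => RInt (V := CV) (H x) a b) s (RInt (V := CV) (K s) a b).
Proof.
  intros Ha Hb Hs eps Heps.
  destruct (cont_I2_uniform_in_second K s K_cont Hs (eps/8) ltac:(lra)) as [d [Hd T]].
  exists d. split; auto. intros s' Hs' Hss'.
  assert (C1 := cont_I2_section H s' H_cont Hs'). assert (C2 := cont_I2_section H s H_cont Hs).
  assert (C3 := cont_I2_section K s K_cont Hs).
  assert (C4 : cont_I (fun t => RtoC (s' - s) * K s t)%C) by (apply cont_I_mult; auto using cont_I_const).
  rewrite <- RInt_Cmult, <- !RInt_Cminus by auto using ex_RInt_cont_I, cont_I_minus.
  apply Rle_trans with (eps / 4 * Rabs (s' - s) * Rabs (b - a)).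
  2:{ assert (Rabs (b - a) <= 2) by (unfold inI in *; unfold Rabs; destruct Rcase_abs; lra).
      pose proof (Rabs_pos (s' - s)) as P. pose proof (Rabs_pos (b - a)) as P'.
      apply Rle_trans with (eps / 4 * Rabs (s' - s) * 2); [apply Rmult_le_compat_l|]; nra. }
  apply Cmod_RInt_le; [apply ex_RInt_cont_I; auto using cont_I_minus|].
  intros t Ht. assert (HtI : inI t) by (apply (between_inI a b); auto).
  (* mean value inequality for x |-> H x t - x K s t, whose derivative K x t - K s t is small *)
  set (phi := fun x => (H x t - RtoC x * K s t)%C).
  replace (H s' t - H s t - RtoC (s' - s) * K s t)%C with (phi s' - phi s)%C
    by (unfold phi; rewrite RtoC_minus; ring).
  eapply Rle_trans; [apply (mean_value_ineq_I phi (fun x => K x t - K s t)%C s s' (eps / 8))|]; auto; [| |lra].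
  - intros x Hx. apply has_derive_I_minus; [|apply has_derive_I_id_mult].
    apply H_derive; auto. apply (between_inI s s'); auto.
  - intros x Hx. apply Rlt_le, T; auto; [apply (between_inI s s'); auto|].
    eapply Rle_lt_trans; [apply Rabs_sub_le_between, Hx | exact Hss'].
Qed.

Lemma has_derive_I_RInt_param_var a s : inI a -> inI s ->
  has_derive_I (fun x => RInt (V := CV) (H x) a x) s (H s s + RInt (V := CV) (K s) a s)%C.
Proof.
  intros Ha Hs eps Heps.
  destruct (has_derive_I_RInt_param a s s Ha Hs Hs (eps/2) ltac:(lra)) as [d1 [Hd1 L1]].
  destruct (H_cont s s Hs Hs (eps/2) ltac:(lra)) as [d2 [Hd2 L2]].
  exists (Rmin d1 d2). split; [now apply Rmin_pos|]. intros s' Hs' Hss'.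
  pose proof (Rmin_l d1 d2). pose proof (Rmin_r d1 d2).
  specialize (L1 s' Hs' ltac:(lra)).
  assert (C1 := cont_I2_section H s' H_cont Hs').
  rewrite <- (RInt_Chasles (V := CV) (H s') a s s') by (apply ex_RInt_cont_I; auto).
  set (X := (RInt (V := CV) (H s') a s - RInt (V := CV) (H s) a s
             - RtoC (s' - s) * RInt (V := CV) (K s) a s)%C) in *.
  change (Cmod (RInt (V := CV) (H s') a s + RInt (V := CV) (H s') s s' - RInt (V := CV) (H s) a s
      - RtoC (s' - s) * (H s s + RInt (V := CV) (K s) a s))%C <= eps * Rabs (s' - s)).
  replace (RInt (V := CV) (H s') a s + RInt (V := CV) (H s') s s' - RInt (V := CV) (H s) a s
      - RtoC (s' - s) * (H s s + RInt (V := CV) (K s) a s))%C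
    with (X + (RInt (V := CV) (H s') s s' - RtoC (s' - s) * H s s))%C by (unfold X; ring).
  rewrite <- RInt_Cconst, <- RInt_Cminus by auto using ex_RInt_cont_I, cont_I_const.
  eapply Rle_trans; [apply Cmod_triangle|].
  assert (Cmod (RInt (V := CV) (fun t => H s' t - H s s)%C s s') <= eps / 2 * Rabs (s' - s)).
  { apply Cmod_RInt_le; [apply ex_RInt_cont_I; auto using cont_I_minus, cont_I_const|].
    intros t Ht. assert (HtI : inI t) by (apply (between_inI s s'); auto).
    apply Rlt_le, L2; auto; [lra|].
    eapply Rle_lt_trans; [apply Rabs_sub_le_between, Ht | lra]. }
  lra.
Qed.

End Leibniz.

Lemma has_derive_I_RInt_upper h a s : cont_I h -> inI a -> inI s ->
  has_derive_I (fun x => RInt (V := CV) h a x) s (h s).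
Proof.
  intros Hh Ha Hs.
  eapply has_derive_I_val.
  - apply (has_derive_I_RInt_param_var (fun _ t => h t) (fun _ _ => RtoC 0));
      auto using cont_I2_of_cont_I, cont_I2_const, has_derive_I_const.
  - rewrite RInt_Cconst. ring.
Qed.

(** * The coefficient recurrence *)

Lemma Cpowz_succ (c : C) (k : Z) : c <> RtoC 0 -> Cpowz c (k + 1) = (c * Cpowz c k)%C.
Proof.
  intros Hc. unfold Cpowz.
  destruct (Z.leb_spec 0 (k + 1)) as [H1|H1]; destruct (Z.leb_spec 0 k) as [H2|H2]; [| |lia|].
  - replace (Z.to_nat (k + 1)) with (S (Z.to_nat k)) by lia. apply Cpow_S.
  - replace k with (-1)%Z by lia. simpl. field. auto.
  - replace (Z.to_nat (- k)) with (S (Z.to_nat (- (k + 1)))) by lia. rewrite Cpow_S.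
    field. split; auto. apply Cpow_nz; auto.
Qed.

(* [Binomial.C l p] is [l! / p!], not 0, when [p > l] (truncated subtraction). *)
Definition binom (l p : nat) : R := if (p <=? l)%nat then Binomial.C l p else 0.

Lemma binom_pascal l p : binom (S l) (S p) = binom l p + binom l (S p).
Proof.
  unfold binom. destruct (Nat.leb_spec (S p) (S l)), (Nat.leb_spec p l), (Nat.leb_spec (S p) l); try lia.
  - rewrite <- pascal by lia. ring.
  - replace p with l by lia. rewrite !C_n_n. ring.
  - ring.
Qed.

Lemma binom_0 l : binom l 0 = 1.
Proof. apply C_n_0. Qed.

Lemma binom_gt l p : (l < p)%nat -> binom l p = 0.
Proof. intros. unfold binom. destruct (Nat.leb_spec p l); auto; lia. Qed.

Lemma binom_le l p : (p <= l)%nat -> binom l p = Binomial.C l p.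
Proof. intros. unfold binom. destruct (Nat.leb_spec p l); auto; lia. Qed.

Section Coefficients.

Variable c : C.
Hypothesis c_neq0 : c <> RtoC 0.
Variable n : nat.

Definition boundary_sum (l : nat) (X : nat -> nat -> C) : C :=
  csum n (fun q => csum (S l) (fun p =>
    if (l <=? q + p)%nat
    then (RtoC (Binomial.C l p) * Cpowz c (Z.of_nat l - 1 - Z.of_nat p - Z.of_nat q) * X p q)%C
    else RtoC 0)).

Definition integral_sum (l : nat) (Y : nat -> C) : C :=
  csum (S l) (fun p => RtoC (Binomial.C l p) * Cpowz c (Z.of_nat l - Z.of_nat p - Z.of_nat n) * Y p)%C.

(* With [c = -i kappa], [X p q = L^{(p,q)}(s,s)] and [Y p = int_a^s L^{(p,n)}(s,t) e^{i kappa (t-s)} dt]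
   this is the right-hand side of the claimed formula for [g^{(l)}(s)]. *)
Definition derivative_formula (l : nat) (X : nat -> nat -> C) (Y : nat -> C) : C :=
  (- boundary_sum l X + integral_sum l Y)%C.

Lemma integral_sum_recurrence l Y :
  integral_sum l (fun p => Y (S p) + c * Y p)%C = integral_sum (S l) Y.
Proof.
  unfold integral_sum.
  set (w := fun l p => Cpowz c (Z.of_nat l - Z.of_nat p - Z.of_nat n)).
  assert (Hw : forall l p, (p <= l)%nat -> w (S l) (S p) = w l p).
  { intros. unfold w. f_equal. lia. }
  assert (Hw' : forall l p, w l p = (c * w l (S p))%C).
  { intros. unfold w. rewrite <- Cpowz_succ by auto. f_equal. lia. }
  rewrite (csum_pad (S l) (S (S l)) _
     (fun p => RtoC (binom l p) * w l p * Y (S p) + RtoC (binom l p) * w l p * c * Y p)%C); [| lia | |].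
  2:{ intros k Hk. rewrite binom_le by lia. unfold w. ring. }
  2:{ intros k Hk. rewrite binom_gt by lia. ring. }
  rewrite (csum_ext (S (S l))
    (fun p => RtoC (Binomial.C (S l) p) * Cpowz c (Z.of_nat (S l) - Z.of_nat p - Z.of_nat n) * Y p)%C
    (fun p => RtoC (binom (S l) p) * w (S l) p * Y p)%C)
    by (intros k Hk; rewrite binom_le by lia; reflexivity).
  rewrite csum_plus, (csum_Sr (S l) (fun p => RtoC (binom l p) * w l p * Y (S p))%C),
    (csum_Sl (S l) (fun p => RtoC (binom l p) * w l p * c * Y p)%C),
    (csum_Sl (S l) (fun p => RtoC (binom (S l) p) * w (S l) p * Y p)%C), (binom_gt l (S l)), !binom_0 by lia.
  rewrite (csum_ext (S l) (fun k => RtoC (binom (S l) (S k)) * w (S l) (S k) * Y (S k))%C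
     (fun k => RtoC (binom l k) * w l k * Y (S k) + RtoC (binom l (S k)) * w l (S k) * c * Y (S k))%C).
  2:{ intros k Hk. rewrite binom_pascal, RtoC_plus, Hw, (Hw' l k) by lia. ring. }
  rewrite csum_plus, (Hw' (S l) 0%nat), Hw by lia. ring.
Qed.

Definition bcoef (l p q : nat) : C :=
  if (l <=? q + p)%nat then (RtoC (binom l p) * Cpowz c (Z.of_nat l - 1 - Z.of_nat p - Z.of_nat q))%C
  else RtoC 0.

(* Coefficients of [X p q] produced by the shifts [p -> p + 1] and [q -> q + 1]. *)
Definition bcoef_shift_p (l p q : nat) : C := match p with O => RtoC 0 | S p' => bcoef l p' q end.
Definition bcoef_shift_q (l p q : nat) : C := match q with O => RtoC 0 | S q' => bcoef l p q' end.

Lemma bcoef_pascal l p q : (bcoef_shift_p l p q + bcoef_shift_q l p q)%C = bcoef (S l) p q.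
Proof.
  unfold bcoef_shift_p, bcoef_shift_q, bcoef.
  destruct p as [|p'], q as [|q'].
  - destruct (Nat.leb_spec (S l) (0 + 0)); [lia | ring].
  - destruct (Nat.leb_spec l (q' + 0)), (Nat.leb_spec (S l) (S q' + 0)); try lia; rewrite ?binom_0; [|ring].
    replace (Z.of_nat l - 1 - Z.of_nat 0 - Z.of_nat q')%Z
      with (Z.of_nat (S l) - 1 - Z.of_nat 0 - Z.of_nat (S q'))%Z by lia. ring.
  - destruct (Nat.leb_spec l (0 + p')), (Nat.leb_spec (S l) (0 + S p')); try lia; [|ring].
    rewrite binom_pascal, (binom_gt l (S p')), RtoC_plus by lia.
    replace (Z.of_nat l - 1 - Z.of_nat p' - Z.of_nat 0)%Z
      with (Z.of_nat (S l) - 1 - Z.of_nat (S p') - Z.of_nat 0)%Z by lia. ring.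
  - destruct (Nat.leb_spec l (S q' + p')), (Nat.leb_spec l (q' + S p')),
      (Nat.leb_spec (S l) (S q' + S p')); try lia; [|ring].
    rewrite binom_pascal, RtoC_plus.
    replace (Z.of_nat l - 1 - Z.of_nat p' - Z.of_nat (S q'))%Z
      with (Z.of_nat (S l) - 1 - Z.of_nat (S p') - Z.of_nat (S q'))%Z by lia.
    replace (Z.of_nat l - 1 - Z.of_nat (S p') - Z.of_nat q')%Z
      with (Z.of_nat (S l) - 1 - Z.of_nat (S p') - Z.of_nat (S q'))%Z by lia.
    ring.
Qed.

Lemma csum_bcoef_shift_p l q X :
  csum (S (S l)) (fun p => bcoef l p q * X (S p) q)%C = csum (S (S l)) (fun p => bcoef_shift_p l p q * X p q)%C.
Proof.
  rewrite (csum_Sr (S l) (fun p => bcoef l p q * X (S p) q)%C),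
    (csum_Sl (S l) (fun p => bcoef_shift_p l p q * X p q)%C).
  cbn [bcoef_shift_p].
  replace (bcoef l (S l) q) with (RtoC 0)
    by (unfold bcoef; rewrite binom_gt by lia; destruct (l <=? q + S l)%nat; ring).
  ring.
Qed.

Lemma csum_bcoef_shift_q l m X :
  csum n (fun q => csum m (fun p => bcoef l p q * X p (S q))%C) =
  (csum n (fun q => csum m (fun p => bcoef_shift_q l p q * X p q)%C)
   + csum m (fun p => bcoef_shift_q l p n * X p n)%C)%C.
Proof.
  rewrite <- (csum_Sr n (fun q => csum m (fun p => bcoef_shift_q l p q * X p q)%C)), csum_Sl.
  cbn [bcoef_shift_q].
  rewrite (csum_ext m (fun p => RtoC 0 * X p 0%nat)%C (fun _ => RtoC 0)), csum_zero by (intros; ring).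
  ring.
Qed.

Lemma integral_sum_plus l Y1 Y2 :
  integral_sum l (fun p => Y1 p + Y2 p)%C = (integral_sum l Y1 + integral_sum l Y2)%C.
Proof.
  unfold integral_sum. rewrite <- csum_plus. apply csum_ext. intros. ring.
Qed.

Lemma boundary_sum_recurrence l X : (l < n)%nat ->
  boundary_sum l (fun p q => X (S p) q + X p (S q))%C
  = (boundary_sum (S l) X + integral_sum l (fun p => X p n))%C.
Proof.
  intros Hln. unfold boundary_sum.
  assert (S1 : csum n (fun q => csum (S l) (fun p => if (l <=? q + p)%nat then
      (RtoC (Binomial.C l p) * Cpowz c (Z.of_nat l - 1 - Z.of_nat p - Z.of_nat q) * (X (S p) q + X p (S q)))%C
      else RtoC 0)) =
     (csum n (fun q => csum (S (S l)) (fun p => bcoef l p q * X (S p) q)%C)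
      + csum n (fun q => csum (S (S l)) (fun p => bcoef l p q * X p (S q))%C))%C).
  { rewrite <- csum_plus. apply csum_ext. intros q Hq. rewrite <- csum_plus.
    apply csum_pad; [lia | |]; intros k Hk; unfold bcoef.
    - rewrite binom_le by lia. destruct (l <=? q + k)%nat; ring.
    - rewrite binom_gt by lia. destruct (l <=? q + k)%nat; ring. }
  assert (B : csum (S (S l)) (fun p => bcoef_shift_q l p n * X p n)%C = integral_sum l (fun p => X p n)).
  { unfold integral_sum. destruct n as [|n']; [lia|]. symmetry. apply csum_pad; [lia | |]; intros k Hk;
      cbn [bcoef_shift_q]; unfold bcoef.
    - destruct (Nat.leb_spec l (n' + k)); [|lia]. rewrite binom_le by lia.
      replace (Z.of_nat l - Z.of_nat k - Z.of_nat (S n'))%Z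
        with (Z.of_nat l - 1 - Z.of_nat k - Z.of_nat n')%Z by lia. ring.
    - rewrite binom_gt by lia. destruct (l <=? n' + k)%nat; ring. }
  assert (A : csum n (fun q => csum (S (S l)) (fun p => if (S l <=? q + p)%nat then
      (RtoC (Binomial.C (S l) p) * Cpowz c (Z.of_nat (S l) - 1 - Z.of_nat p - Z.of_nat q) * X p q)%C
      else RtoC 0)) =
     (csum n (fun q => csum (S (S l)) (fun p => bcoef_shift_p l p q * X p q)%C)
      + csum n (fun q => csum (S (S l)) (fun p => bcoef_shift_q l p q * X p q)%C))%C).
  { rewrite <- csum_plus. apply csum_ext. intros q Hq. rewrite <- csum_plus. apply csum_ext. intros p Hp.
    rewrite <- Cmult_plus_distr_r, bcoef_pascal. unfold bcoef.
    rewrite binom_le by lia. destruct (S l <=? q + p)%nat; ring. }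
  rewrite S1, csum_bcoef_shift_q, A, <- B.
  rewrite (csum_ext n _ _ (fun q _ => csum_bcoef_shift_p l q X)). ring.
Qed.

Lemma derivative_formula_step l X Y : (l < n)%nat ->
  derivative_formula l (fun p q => X (S p) q + X p (S q))%C (fun p => X p n + Y (S p) + c * Y p)%C
  = derivative_formula (S l) X Y.
Proof.
  intros Hl. unfold derivative_formula.
  rewrite boundary_sum_recurrence, <- integral_sum_recurrence by auto.
  rewrite !integral_sum_plus. ring.
Qed.

Lemma boundary_sum_0 X :
  boundary_sum 0 X = csum n (fun q => Cpowz c (- Z.of_nat (S q)) * X 0%nat q)%C.
Proof.
  unfold boundary_sum. apply csum_ext. intros q _.
  rewrite csum_Sl. cbn [Nat.leb]. rewrite C_n_0.
  replace (Z.of_nat 0 - 1 - Z.of_nat 0 - Z.of_nat q)%Z with (- Z.of_nat (S q))%Z by lia.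
  unfold csum. simpl. ring.
Qed.

Lemma integral_sum_0 Y : integral_sum 0 Y = (Cpowz c (- Z.of_nat n) * Y 0%nat)%C.
Proof.
  unfold integral_sum. rewrite csum_Sl, C_n_0.
  replace (Z.of_nat 0 - Z.of_nat 0 - Z.of_nat n)%Z with (- Z.of_nat n)%Z by lia.
  unfold csum. simpl. ring.
Qed.

End Coefficients.

Lemma sigma_coef_Cpowz (z : C) j : z <> RtoC 0 ->
  Cdiv (Cpow (RtoC (-1)) j) (Cpow z (S j)) = Copp (Cpowz (- z) (- Z.of_nat (S j))).
Proof.
  intros Hz. unfold Cpowz. destruct (Z.leb_spec 0 (- Z.of_nat (S j))) as [|_]; [lia|].
  replace (Z.to_nat (- - Z.of_nat (S j))) with (S j) by lia.
  replace (- z)%C with (RtoC (-1) * z)%C by ring. rewrite Cpow_mult_l, !Cpow_S.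
  assert (Hm : (Cpow (RtoC (-1)) j * Cpow (RtoC (-1)) j)%C = RtoC 1).
  { rewrite <- Cpow_mult_l. replace (RtoC (-1) * RtoC (-1))%C with (RtoC 1) by ring. apply Cpow_1_l. }
  assert (Hzj : Cpow z j <> RtoC 0) by (apply Cpow_nz; auto).
  set (m := Cpow (RtoC (-1)) j) in *. set (P := Cpow z j) in *.
  assert (m <> RtoC 0) by (intro E; rewrite E in Hm; apply (f_equal fst) in Hm; simpl in Hm; lra).
  assert (RtoC (-1) <> RtoC 0) by (intro E; apply RtoC_inj in E; lra).
  unfold Cdiv. transitivity ((m * m) * / (m * (z * P)))%C.
  - field. auto.
  - rewrite Hm. field. auto.
Qed.

Lemma Cpowz_telescope c n X : c <> RtoC 0 ->
  (c * csum n (fun j => Cpowz c (- Z.of_nat (S j)) * X j) - csum n (fun j => Cpowz c (- Z.of_nat (S j)) * X (S j)))%C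
  = (X 0%nat - Cpowz c (- Z.of_nat n) * X n)%C.
Proof.
  intros Hc. induction n as [|n IH].
  - change (c * RtoC 0 - RtoC 0 = X 0%nat - RtoC 1 * X 0%nat)%C. ring.
  - rewrite !csum_Sr.
    replace (- Z.of_nat n)%Z with (- Z.of_nat (S n) + 1)%Z in IH by lia. rewrite Cpowz_succ in IH by auto.
    set (A := csum n (fun j => Cpowz c (- Z.of_nat (S j)) * X j)%C) in *.
    set (B := csum n (fun j => Cpowz c (- Z.of_nat (S j)) * X (S j))%C) in *.
    transitivity ((c * A - B) + c * Cpowz c (- Z.of_nat (S n)) * X n
                  - Cpowz c (- Z.of_nat (S n)) * X (S n))%C; [ring|].
    rewrite IH. ring.
Qed.

Lemma sigma_n_Cpowz kappa n du t : kappa <> 0 ->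
  sigma_n kappa n du t = (- csum n (fun j => Cpowz (0, (- kappa)%R) (- Z.of_nat (S j)) * du j t))%C.
Proof.
  intros Hk. unfold sigma_n.
  match goal with |- _ = (- ?S)%C => replace (- S)%C with (- RtoC 1 * S)%C by ring end.
  rewrite <- csum_scal.
  apply csum_ext. intros j _.
  rewrite sigma_coef_Cpowz by (intro E; injection E; auto).
  replace (- (0, kappa))%C with ((0, (- kappa)%R) : C) by (unfold Copp; f_equal; simpl; ring). ring.
Qed.

Lemma has_derive_I_sigma_n kappa n du y : (forall j, (j < n)%nat -> has_derive_I (du j) y (du (S j) y)) ->
  has_derive_I (sigma_n kappa n du) y (sigma_n kappa n (fun j => du (S j)) y).
Proof.
  intros H. unfold sigma_n. apply has_derive_I_csum. intros j Hj. apply has_derive_I_scal, H; auto.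
Qed.

(** * The kernel L *)

Section Kernel.

Variables (kappa : R) (n : nat) (a : R) (L : R -> R -> C) (Lp : nat -> nat -> R -> R -> C).
Hypothesis kappa_neq0 : kappa <> 0.
Hypothesis a_inI : inI a.
Hypothesis L_smooth : Cn_I2 n L Lp.

Lemma Lp_cont p q : (p <= n)%nat -> (q <= n)%nat -> cont_I2 (Lp p q).
Proof. intros. apply continuous_I2_cont_I2, (proj2 (proj2 (proj2 L_smooth))); auto. Qed.

Lemma has_derive_I_Lp_s p q x t : (p < n)%nat -> (q <= n)%nat -> inI x -> inI t ->
  has_derive_I (fun y => Lp p q y t) x (Lp (S p) q x t).
Proof. intros. apply is_derive_I_has_derive_I, (proj1 (proj2 (proj2 L_smooth))); auto. Qed.

Lemma has_derive_I_L0_t q s t : (q < n)%nat -> inI s -> inI t ->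
  has_derive_I (Lp 0%nat q s) t (Lp 0%nat (S q) s t).
Proof. intros. apply is_derive_I_has_derive_I, (proj1 (proj2 L_smooth)); auto. Qed.

(* Only t-derivatives of Lp 0 q are assumed; for p > 0 they come from this representation by
   differentiating in s under the integral sign. *)
Lemma Lp_integral_repr p q s t : (p <= n)%nat -> (q < n)%nat -> inI s -> inI t ->
  Lp p q s t = (Lp p q s a + RInt (V := CV) (Lp p (S q) s) a t)%C.
Proof.
  revert s t. induction p as [|p IH]; intros s t Hp Hq Hs Ht.
  - assert (E : forall x, inI x -> (Lp 0%nat q s x - RInt (V := CV) (Lp 0%nat (S q) s) a x)%C =
                  (Lp 0%nat q s a - RInt (V := CV) (Lp 0%nat (S q) s) a a)%C).
    { intros x Hx.
      apply (has_derive_I_zero_const (fun x => Lp 0%nat q s x - RInt (V := CV) (Lp 0%nat (S q) s) a x)%C); auto.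
      intros y Hy. eapply has_derive_I_val.
      - apply has_derive_I_minus; [apply has_derive_I_L0_t; auto|].
        apply has_derive_I_RInt_upper; auto. apply cont_I2_section; auto. apply Lp_cont; lia.
      - ring. }
    specialize (E t Ht).
    replace (RInt (V := CV) (Lp 0%nat (S q) s) a a) with (RtoC 0) in E
      by (rewrite (RInt_point (V := CV)); reflexivity).
    replace (Lp 0%nat q s t) with ((Lp 0%nat q s t - RInt (V := CV) (Lp 0%nat (S q) s) a t)
      + RInt (V := CV) (Lp 0%nat (S q) s) a t)%C by ring.
    rewrite E. ring.
  - apply (has_derive_I_unique (fun x => Lp p q x t) s); auto.
    + apply has_derive_I_Lp_s; auto; lia.
    + apply (has_derive_I_ext (fun x => Lp p q x a + RInt (V := CV) (Lp p (S q) x) a t)%C); auto.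
      { intros x Hx. symmetry. apply IH; auto. lia. }
      apply has_derive_I_plus; [apply has_derive_I_Lp_s; auto; lia|].
      apply has_derive_I_RInt_param; auto; try (apply Lp_cont; lia).
      intros. apply has_derive_I_Lp_s; auto; lia.
Qed.

Lemma has_derive_I_Lp_diag p q s : (p < n)%nat -> (q < n)%nat -> inI s ->
  has_derive_I (fun x => Lp p q x x) s (Lp (S p) q s s + Lp p (S q) s s)%C.
Proof.
  intros Hp Hq Hs.
  apply (has_derive_I_ext (fun x => Lp p q x a + RInt (V := CV) (Lp p (S q) x) a x)%C); auto.
  { intros x Hx. symmetry. apply Lp_integral_repr; auto; lia. }
  eapply has_derive_I_val.
  - apply has_derive_I_plus; [apply has_derive_I_Lp_s; auto; lia|].
    apply (has_derive_I_RInt_param_var (Lp p (S q)) (Lp (S p) (S q))); auto; try (apply Lp_cont; lia).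
    intros. apply has_derive_I_Lp_s; auto; lia.
  - rewrite (Lp_integral_repr (S p) q s s) by (auto; lia). ring.
Qed.

Definition osc_integral (p : nat) (s : R) : C :=
  RInt (V := CV) (fun t => Lp p n s t * cis (kappa * (t - s)))%C a s.

Lemma has_derive_I_osc_integral p s : (p < n)%nat -> inI s ->
  has_derive_I (osc_integral p) s (Lp p n s s + osc_integral (S p) s + (0, (- kappa)%R) * osc_integral p s)%C.
Proof.
  intros Hp Hs. unfold osc_integral.
  assert (HE := cont_I2_cis_diff kappa).
  assert (Hint : forall p', (p' <= n)%nat -> cont_I2 (fun x t => Lp p' n x t * cis (kappa * (t - x)))%C)
    by (intros; apply cont_I2_mult; auto; apply Lp_cont; lia).
  assert (Hex : forall p', (p' <= n)%nat ->
      ex_RInt (V := CV) (fun t => Lp p' n s t * cis (kappa * (t - s)))%C a s).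
  { intros p' Hp'. apply ex_RInt_cont_I; auto.
    apply (cont_I2_section (fun x t => Lp p' n x t * cis (kappa * (t - x)))%C s); auto. }
  eapply has_derive_I_val.
  - apply (has_derive_I_RInt_param_var (fun x t => Lp p n x t * cis (kappa * (t - x)))
      (fun x t => Lp (S p) n x t * cis (kappa * (t - x))
                  + (0, (- kappa)%R) * (Lp p n x t * cis (kappa * (t - x)))))%C; auto.
    + apply Hint; lia.
    + apply cont_I2_plus; [apply Hint; lia|].
      apply cont_I2_mult; [apply cont_I2_const | apply Hint; lia].
    + intros x t Hx Ht. eapply has_derive_I_val.
      * apply has_derive_I_mult; [apply has_derive_I_Lp_s; auto; lia|].
        apply (has_derive_I_ext (fun y => cis (- kappa * y + kappa * t))); auto.
        { intros y _. f_equal. ring. }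
        apply has_derive_I_cis.
      * replace (- kappa * x + kappa * t) with (kappa * (t - x)) by ring. ring.
  - cbv beta. replace (kappa * (s - s)) with 0 by ring. rewrite cis_0, Cmult_1_r, <- Cplus_assoc. f_equal.
    rewrite <- (RInt_Cmult (0, (- kappa)%R) (fun t => Lp p n s t * cis (kappa * (t - s)))%C)
      by (apply Hex; lia).
    apply RInt_Cplus; [apply Hex; lia|].
    apply ex_RInt_cont_I; auto. apply cont_I_mult; [apply cont_I_const|].
    apply (cont_I2_section (fun x t => Lp p n x t * cis (kappa * (t - x)))%C s); auto; apply Hint; lia.
Qed.

Definition g_deriv (l : nat) (s : R) : C :=
  derivative_formula (0, (- kappa)%R) n l (fun p q => Lp p q s s) (fun p => osc_integral p s).

Lemma has_derive_I_g_deriv l s : (l < n)%nat -> inI s -> has_derive_I (g_deriv l) s (g_deriv (S l) s).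
Proof.
  intros Hl Hs. unfold g_deriv.
  rewrite <- derivative_formula_step by (auto; intro E; injection E; lra).
  unfold derivative_formula, boundary_sum, integral_sum.
  apply has_derive_I_plus; [apply has_derive_I_opp|];
    apply has_derive_I_csum; intros q Hq; [apply has_derive_I_csum; intros p Hp|].
  - destruct (l <=? q + p)%nat; [|apply has_derive_I_const].
    apply has_derive_I_scal, has_derive_I_Lp_diag; auto; lia.
  - apply has_derive_I_scal, has_derive_I_osc_integral; auto; lia.
Qed.

Lemma has_derive_I_ibp_remainder s y : inI s -> inI y ->
  has_derive_I (fun x => sigma_n kappa n (fun j => Lp 0%nat j s) x * cis (kappa * x)
      + Cpowz (0, (- kappa)%R) (- Z.of_nat n) * RInt (V := CV) (fun t => Lp 0%nat n s t * cis (kappa * t)) a x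
      - RInt (V := CV) (fun t => L s t * cis (kappa * t)) a x)%C y 0%C.
Proof.
  intros Hs Hy.
  set (c := ((0, (- kappa)%R) : C)). set (cn := Cpowz c (- Z.of_nat n)).
  assert (Hc : c <> RtoC 0) by (intro E; injection E; lra).
  assert (HL : forall t, inI t -> Lp 0%nat 0%nat s t = L s t) by (intros; apply L_smooth; auto).
  assert (Hcont : forall q, (q <= n)%nat -> cont_I (fun t => Lp 0%nat q s t * cis (kappa * t))%C).
  { intros q Hq. apply (cont_I2_section (fun y t => Lp 0%nat q y t * cis (kappa * t))%C); auto.
    apply cont_I2_mult; [apply Lp_cont; lia | apply cont_I2_cis_scal]. }
  eapply has_derive_I_val.
  - apply has_derive_I_minus; [apply has_derive_I_plus|].
    + apply has_derive_I_mult.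
      * apply has_derive_I_sigma_n. intros j Hj. apply has_derive_I_L0_t; auto.
      * apply (has_derive_I_ext (fun y => cis (kappa * y + 0))); auto; [intros; rewrite Rplus_0_r; auto|].
        apply has_derive_I_cis.
    + apply has_derive_I_scal, has_derive_I_RInt_upper; auto.
    + apply has_derive_I_RInt_upper; auto.
      apply (cont_I_ext _ _ (Hcont 0%nat ltac:(lia))). intros t Ht. rewrite HL; auto.
  - rewrite !sigma_n_Cpowz, Rplus_0_r, <- (HL y Hy) by auto. fold c cn.
    replace ((0, kappa) : C) with (- c)%C by (unfold c, Copp; f_equal; simpl; ring).
    cbv beta. set (A := csum n (fun j => Cpowz c (- Z.of_nat (S j)) * Lp 0%nat j s y)%C).
    set (B := csum n (fun j => Cpowz c (- Z.of_nat (S j)) * Lp 0%nat (S j) s y)%C).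
    transitivity ((c * A - B - (Lp 0%nat 0%nat s y - cn * Lp 0%nat n s y)) * cis (kappa * y))%C; [ring|].
    unfold A, B. rewrite Cpowz_telescope by auto. fold cn. ring.
Qed.

Lemma integration_by_parts s x : inI s -> inI x ->
  RInt (V := CV) (fun t => L s t * cis (kappa * t))%C a x
  = (sigma_n kappa n (fun j => Lp 0%nat j s) x * cis (kappa * x)
     - sigma_n kappa n (fun j => Lp 0%nat j s) a * cis (kappa * a)
     + Cpowz (0, (- kappa)%R) (- Z.of_nat n)
       * RInt (V := CV) (fun t => Lp 0%nat n s t * cis (kappa * t))%C a x)%C :> C.
Proof.
  intros Hs Hx.
  assert (Hxa := has_derive_I_zero_const _ x a (fun y => has_derive_I_ibp_remainder s y Hs) Hx a_inI).
  assert (Hpoint : forall f, RInt (V := CV) f a a = RtoC 0) by (intros; apply (RInt_point (V := CV))).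
  cbv beta in Hxa. rewrite !Hpoint in Hxa.
  set (sigma := sigma_n kappa n (fun j => Lp 0%nat j s)) in *.
  set (cn := Cpowz (0, (- kappa)%R) (- Z.of_nat n)) in *.
  revert Hxa. generalize (RInt (V := CV) (fun t => L s t * cis (kappa * t))%C a x : C)
    (RInt (V := CV) (fun t => Lp 0%nat n s t * cis (kappa * t))%C a x : C). intros J0 Jn Hxa.
  replace J0 with (sigma x * cis (kappa * x) + cn * Jn - (sigma x * cis (kappa * x) + cn * Jn - J0))%C by ring.
  rewrite Hxa. ring.
Qed.

Lemma g_deriv_0 s : inI s ->
  g_deriv 0 s = Cmult (Cminus (RInt (V := CV) (fun t => Cmult (L s t) (cis (kappa * t))) a s)
                        (Copp (Cmult (cis (kappa * a)) (sigma_n kappa n (fun j => Lp O j s) a))))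
                (cis (- (kappa * s))).
Proof.
  intros Hs. unfold g_deriv, derivative_formula. rewrite boundary_sum_0, integral_sum_0.
  rewrite integration_by_parts by auto.
  assert (Hosc : osc_integral 0 s
      = (cis (- (kappa * s)) * RInt (V := CV) (fun t => Lp 0%nat n s t * cis (kappa * t))%C a s)%C).
  { unfold osc_integral. rewrite <- RInt_Cmult.
    - apply RInt_C_ext. intros t.
      replace (kappa * (t - s)) with (kappa * t + - (kappa * s)) by ring. rewrite <- cis_add. ring.
    - apply ex_RInt_cont_I; auto.
      apply (cont_I2_section (fun y t => Lp 0%nat n y t * cis (kappa * t))%C); auto.
      apply cont_I2_mult; [apply Lp_cont; lia | apply cont_I2_cis_scal]. }
  assert (Hcis : (cis (kappa * s) * cis (- (kappa * s)))%C = RtoC 1)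
    by (rewrite cis_add, Rplus_opp_r; apply cis_0).
  rewrite Hosc, (sigma_n_Cpowz kappa n _ s) by auto. cbv beta.
  generalize (RInt (V := CV) (fun t => Lp 0%nat n s t * cis (kappa * t))%C a s : C). intros J.
  transitivity (- csum n (fun q => Cpowz (0, (- kappa)%R) (- Z.of_nat (S q)) * Lp 0%nat q s s)
      * (cis (kappa * s) * cis (- (kappa * s)))
    + Cpowz (0, (- kappa)%R) (- Z.of_nat n) * (cis (- (kappa * s)) * J))%C.
  - rewrite Hcis. ring.
  - ring.
Qed.

End Kernel.

Theorem lemma4p2 (kappa : R) (n : nat) (a : R) (L : R -> R -> C)
  (Lp : nat -> nat -> R -> R -> C) :
  1 < kappa -> inI a -> Cn_I2 n L Lp ->
  let ell := fun s => RInt (V := C_R_CompleteNormedModule)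
                        (fun t => Cmult (L s t) (cis (kappa * t))) a s in
  let r := fun s => Copp (Cmult (cis (kappa * a)) (sigma_n kappa n (fun j => Lp O j s) a)) in
  let g := fun s => Cmult (Cminus (ell s) (r s)) (cis (- (kappa * s))) in
  exists G : nat -> R -> C, derivs_I g n G /\
    forall l s, (l <= n)%nat -> inI s ->
      G l s =
      Cplus
        (Copp (csum n (fun q => csum (S l) (fun p =>
           if (l <=? q + p)%nat then
             Cmult (Cmult (RtoC (Binomial.C l p))
                          (Cpowz (0, - kappa) (Z.of_nat l - 1 - Z.of_nat p - Z.of_nat q)))
                   (Lp p q s s)
           else RtoC 0))))
        (csum (S l) (fun p =>
           Cmult (Cmult (RtoC (Binomial.C l p))
                        (Cpowz (0, - kappa) (Z.of_nat l - Z.of_nat p - Z.of_nat n)))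
                 (RInt (V := C_R_CompleteNormedModule)
                    (fun t => Cmult (Lp p n s t) (cis (kappa * (t - s)))) a s))).
Proof.
  intros Hkappa Ha HL ell r g.
  assert (Hkappa0 : kappa <> 0) by lra.
  exists (g_deriv kappa n a Lp). split; [split|].
  - intros s Hs. exact (g_deriv_0 kappa n a L Lp Hkappa0 Ha HL s Hs).
  - intros l s Hl Hs. apply has_derive_I_is_derive_I, (has_derive_I_g_deriv kappa n a L Lp); auto.
  - reflexivity.
Qed.
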